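(* The hypergraph $K_{15}^{(3)}-I$ admits a decomposition into $50$ tight $9$-cycles.
   Context: $K_v^{(3)}$ denotes the complete $3$-uniform hypergraph on $v$ vertices. For $3\mid v$, $K_v^{(3)}-I$ is obtained from $K_v^{(3)}$ by deleting the edges of a $1$-factor $I$ (a set of $v/3$ pairwise disjoint triples covering all vertices). A (3-uniform tight) $k$-cycle is given by a cyclic sequence $v_1,\dots,v_k$ of $k$ distinct vertices, its edges being the triples $\{v_i,v_{i+1},v_{i+2}\}$ ($i=1,\dots,k$, indices mod $k$). A decomposition is a collection of cycles whose edge sets partition the edge set. *)

From mathcomp Require Import all_boot.
Set Implicit Arguments. Unset Strict Implicit. Unset Printing Implicit Defensive.

Definition triples (T : finType) : {set {set T}} := [set e : {set T} | #|e| == 3].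

Definition one_factor (T : finType) (I : {set {set T}}) : bool :=
  (I \subset triples T) && partition I [set: T].

Definition K3_minus (T : finType) (I : {set {set T}}) : {set {set T}} :=
  triples T :\: I.

(* A tight k-cycle given by the cyclic vertex sequence c = v_1 ... v_k
   (distinct vertices); its edges {v_i, v_{i+1}, v_{i+2}}, indices mod k. *)
Definition is_tight_cycle (T : finType) (k : nat) (c : seq T) : bool :=
  (size c == k) && uniq c.

Definition cycle_edges (T : finType) (c : seq T) : seq {set T} :=
  match c with
  | [::] => [::]
  | x0 :: _ =>
    [seq [set nth x0 c i; nth x0 c ((i + 1) %% size c); nth x0 c ((i + 2) %% size c)]
     | i <- iota 0 (size c)]
  end.

(* A collection cs of tight k-cycles decomposes the hypergraph with edge set E:
   the edge lists of the cycles, concatenated, form exactly the edge set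
   (every edge used exactly once, no other triples). *)
Definition decomposition (T : finType) (k : nat) (E : {set {set T}})
    (cs : seq (seq T)) : bool :=
  all (is_tight_cycle k) cs && perm_eq (flatten (map (@cycle_edges T) cs)) (enum E).

From mathcomp Require Import all_boot zify.
Set Implicit Arguments. Unset Strict Implicit. Unset Printing Implicit Defensive.

(** Every 1-factor of the complete 3-uniform hypergraph on [3n] vertices is the
    image of the standard one, with blocks [{3k, 3k+1, 3k+2}], under a vertex
    permutation, and relabelling vertices maps a cycle decomposition of
    [K - I] to one of [K - f(I)].  So it suffices to exhibit 50 tight 9-cycles
    decomposing [K_15 - I_std].  As [K_15 - I_std] has exactly
    [C(15,3) - 5 = 450] edges, it is enough to check, by computation on
    characteristic vectors, that the 450 edges of the cycles are distinct
    triples none of which is a block of [I_std]. *)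

Definition edges_of (T : finType) (cs : seq (seq T)) : seq {set T} :=
  flatten (map (@cycle_edges T) cs).

Definition cycle_windows (T : Type) (c : seq T) : seq (T * T * T) :=
  if c is x0 :: _ then
    [seq (nth x0 c i, nth x0 c ((i + 1) %% size c), nth x0 c ((i + 2) %% size c))
    | i <- iota 0 (size c)]
  else [::].

Lemma cycle_edgesE (T : finType) (c : seq T) :
  cycle_edges c = [seq [set w.1.1; w.1.2; w.2] | w <- cycle_windows c].
Proof. by case: c => // x0 s; rewrite /= -map_comp. Qed.

Lemma cycle_windows_map (T U : Type) (f : T -> U) (c : seq T) :
  cycle_windows (map f c) = [seq (f w.1.1, f w.1.2, f w.2) | w <- cycle_windows c].
Proof.
case: c => // x0 s; rewrite /cycle_windows.
case E: (map f (x0 :: s)) => [//|y t]; have y_def : y = f x0 by case: E.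
rewrite -{}E {}y_def size_map -map_comp.
apply/eq_in_map => i; rewrite mem_iota => /andP[_ lt_i] /=.
by rewrite -[f x0 :: _]/(map f (x0 :: s)) !(nth_map x0) // ltn_mod.
Qed.

Lemma mem_cycle_windows (T : eqType) (c : seq T) w :
  w \in cycle_windows c -> [/\ w.1.1 \in c, w.1.2 \in c & w.2 \in c].
Proof.
case: c => // x0 s /mapP[i]; rewrite mem_iota => /andP[_ lt_i] -> /=.
by split; apply: mem_nth; rewrite // ltn_mod.
Qed.

Lemma cycle_edges_map (T U : finType) (f : T -> U) (c : seq T) :
  cycle_edges (map f c) = [seq f @: e | e : {set T} <- cycle_edges c].
Proof.
rewrite !cycle_edgesE cycle_windows_map -!map_comp; apply: eq_map => w /=.
by rewrite !imsetU !imset_set1.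
Qed.

Lemma card_K3_minus (T : finType) (I : {set {set T}}) :
  I \subset triples T -> #|K3_minus I| = 'C(#|T|, 3) - #|I|.
Proof. by move=> sIT; rewrite cardsD (setIidPr sIT) card_draws. Qed.

Lemma card_one_factor (T : finType) (I : {set {set T}}) :
  one_factor I -> 3 * #|I| = #|T|.
Proof.
case/andP=> sIT partI; rewrite -cardsT (card_partition partI) mulnC -sum_nat_const.
by apply: eq_bigr => A /(subsetP sIT); rewrite inE => /eqP.
Qed.

Lemma imset_K3_minus (T : finType) (f : T -> T) (I : {set {set T}}) :
  injective f ->
  [set f @: e | e : {set T} in K3_minus I] = K3_minus [set f @: A | A : {set T} in I].
Proof.
move=> /injF_bij[g fK gK].
have imset_fK : cancel (fun A : {set T} => f @: A) (fun A => g @: A).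
  by move=> A; rewrite -imset_comp (eq_imset _ fK) imset_id.
have imset_gK : cancel (fun A : {set T} => g @: A) (fun A => f @: A).
  by move=> A; rewrite -imset_comp (eq_imset _ gK) imset_id.
rewrite /K3_minus !(can2_imset_pre _ imset_fK imset_gK) preimsetD.
congr (_ :\: _); apply/setP => A; rewrite !inE card_imset //; exact: can_inj gK.
Qed.

Lemma edges_of_map (T U : finType) (f : T -> U) (cs : seq (seq T)) :
  edges_of (map (map f) cs) = [seq f @: e | e : {set T} <- edges_of cs].
Proof.
rewrite /edges_of map_flatten -!map_comp; congr flatten.
by apply: eq_map => c; exact: cycle_edges_map.
Qed.

Section Decomposition.

Variables (T : finType) (k : nat).

Lemma decomposition_by_count (E : {set {set T}}) (cs : seq (seq T)) :
  all (is_tight_cycle k) cs -> uniq (edges_of cs) -> {subset edges_of cs <= E} ->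
  size (edges_of cs) = #|E| -> decomposition k E cs.
Proof.
move=> tight_cs uniq_edges sub_edges size_edges; apply/andP; split=> //.
have sub_enum : {subset edges_of cs <= enum E} by move=> e /sub_edges; rewrite mem_enum.
have size_enum : size (enum E) <= size (edges_of cs) by rewrite -cardE size_edges.
have [_ eq_edges] := uniq_min_size uniq_edges sub_enum size_enum.
exact: uniq_perm uniq_edges (enum_uniq _) eq_edges.
Qed.

Lemma decomposition_relabel (f : T -> T) (E : {set {set T}}) (cs : seq (seq T)) :
  injective f -> decomposition k E cs ->
  decomposition k [set f @: e | e : {set T} in E] (map (map f) cs).
Proof.
move=> f_inj /andP[tight_cs perm_edges]; apply/andP; split.
  rewrite all_map; apply: sub_all tight_cs => c /andP[size_c uniq_c].
  by rewrite /= /is_tight_cycle size_map size_c map_inj_uniq.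
rewrite -/(edges_of _) edges_of_map.
apply: perm_trans (perm_map _ perm_edges) _.
apply: uniq_perm; rewrite ?(map_inj_uniq (imset_inj f_inj)) ?enum_uniq // => A.
by rewrite mem_enum; apply/mapP/imsetP => -[e]; rewrite ?mem_enum => e_in ->;
  exists e; rewrite ?mem_enum.
Qed.

End Decomposition.

Section StandardFactor.

Variable n : nat.
Local Notation T := 'I_(3 * n).

Definition std_block (k : nat) : {set T} := [set i : T | i %/ 3 == k].

Definition std_factor : {set {set T}} := [set std_block k | k : 'I_n].

Lemma ord_div3_lt (i : T) : i %/ 3 < n.
Proof. by have := ltn_ord i; lia. Qed.

Lemma std_block_inj : injective (fun k : 'I_n => std_block k).
Proof.
move=> k1 k2 eq_blocks; apply: val_inj => /=.
have lt_3k1 : 3 * k1 < 3 * n by rewrite ltn_pmul2l.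
have : Ordinal lt_3k1 \in std_block k1 by rewrite inE /= mulKn.
by rewrite eq_blocks inE /= mulKn // => /eqP.
Qed.

Lemma card_std_factor : #|std_factor| = n.
Proof. by rewrite card_imset ?card_ord //; exact: std_block_inj. Qed.

Section Relabel.

Variable I : {set {set T}}.
Hypothesis I_factor : one_factor I.

Let part (k : nat) : {set T} := nth set0 (enum I) k.

Let relabel (i : T) : T := nth i (enum (part (i %/ 3))) (i %% 3).

Let size_enum_factor : size (enum I) = n.
Proof. by have := card_one_factor I_factor; rewrite card_ord -cardE; lia. Qed.

Let part_in k : k < n -> part k \in I.
Proof. by move=> lt_k; rewrite -mem_enum mem_nth // size_enum_factor. Qed.

Let card_part k : k < n -> #|part k| = 3.
Proof.
case/andP: I_factor => sIT _ /part_in /(subsetP sIT).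
by rewrite inE => /eqP.
Qed.

Let relabel_in i : relabel i \in part (i %/ 3).
Proof. by rewrite -mem_enum mem_nth // -cardE card_part ?ord_div3_lt // ltn_mod. Qed.

Let relabel_inj : injective relabel.
Proof.
move=> i1 i2 eq_relabel.
have eq_part : part (i1 %/ 3) = part (i2 %/ 3).
  apply/eqP; apply: contraT => neq_part.
  case/andP: I_factor => _ /and3P[_ trivI _].
  have := trivIsetP trivI _ _ (part_in (ord_div3_lt i1)) (part_in (ord_div3_lt i2)) neq_part.
  by move/disjointFr/(_ (relabel_in i1)); rewrite eq_relabel relabel_in.
have eq_div : i1 %/ 3 = i2 %/ 3.
  apply/eqP; rewrite -(nth_uniq set0 _ _ (enum_uniq (mem I)));
    by rewrite ?size_enum_factor ?ord_div3_lt //; apply/eqP.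
have lt_mod (i : T) : i %% 3 < size (enum (part (i2 %/ 3))).
  by rewrite -cardE card_part ?ord_div3_lt // ltn_mod.
have eq_mod : i1 %% 3 = i2 %% 3.
  apply/eqP; rewrite -(nth_uniq i1 (lt_mod i1) (lt_mod i2) (enum_uniq _)).
  by move: eq_relabel; rewrite /relabel eq_div (set_nth_default i1 i2) ?lt_mod // => ->.
by apply: val_inj; rewrite /= (divn_eq i1 3) (divn_eq i2 3) eq_div eq_mod.
Qed.

Let relabel_block k : k < n -> relabel @: std_block k = part k.
Proof.
move=> lt_k; apply/setP => a; apply/imsetP/idP => [[i] | a_in].
  by rewrite inE => /eqP <- ->.
pose r := index a (enum (part k)).
have lt_r : r < 3 by rewrite -(card_part lt_k) cardE index_mem mem_enum.
have lt_i : 3 * k + r < 3 * n by lia.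
have div_i : (3 * k + r) %/ 3 = k by lia.
have mod_i : (3 * k + r) %% 3 = r by lia.
exists (Ordinal lt_i); first by rewrite inE /= div_i.
by rewrite /relabel /= div_i mod_i nth_index ?mem_enum.
Qed.

Lemma one_factor_image_std :
  exists2 f : T -> T, injective f & I = [set f @: A | A : {set T} in std_factor].
Proof.
exists relabel => //; apply/setP => A; apply/idP/imsetP => [A_in | [B]].
  have lt_idx : index A (enum I) < n.
    by have := index_mem A (enum I); rewrite mem_enum A_in size_enum_factor.
  exists (std_block (Ordinal lt_idx)); first exact: imset_f.
  by rewrite relabel_block // /part nth_index ?mem_enum.
by case/imsetP=> k _ -> ->; rewrite relabel_block ?part_in.
Qed.

End Relabel.

End StandardFactor.

(* Finite sets do not reduce under [vm_compute] ([finset] is locked, and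
   [enum 'I_m] is stuck on opaque proofs), so the finite check below runs on
   characteristic vectors indexed by [iota 0 m]. *)
Definition char_seq (m : nat) (A : {set 'I_m}) : seq bool :=
  [seq i \in A | i <- enum 'I_m].

Lemma count_char_seq m (A : {set 'I_m}) : count id (char_seq A) = #|A|.
Proof. by rewrite cardE /enum_mem size_filter -enumT count_map. Qed.

Lemma char_seq_pred m (p : pred nat) : char_seq [set i : 'I_m | p i] = map p (iota 0 m).
Proof. by rewrite -val_enum_ord -map_comp; apply: eq_map => i; rewrite inE. Qed.

Definition triple_code (m : nat) (w : nat * nat * nat) : seq bool :=
  [seq (j == w.1.1) || (j == w.1.2) || (j == w.2) | j <- iota 0 m].

Lemma char_seq_edges m (c : seq nat) : all (fun x => x <= m) c ->
  map (@char_seq m.+1) (cycle_edges (map (@inord m) c)) =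
  map (triple_code m.+1) (cycle_windows c).
Proof.
move=> /allP c_le; rewrite cycle_edgesE cycle_windows_map -!map_comp.
apply/eq_in_map => w /mem_cycle_windows[/c_le le1 /c_le le2 /c_le le3] /=.
have eq_inord a (i : 'I_m.+1) : a <= m -> (i == inord a) = (i == a :> nat).
  by move=> le_a; rewrite -val_eqE /= inordK.
rewrite /triple_code -char_seq_pred; congr char_seq.
by apply/setP => i; rewrite !inE !eq_inord.
Qed.

Definition cycles15 : seq (seq nat) :=
  [:: [::11;2;7;12;8;9;5;10;6];
     [::14;5;10;0;11;12;8;13;9];
     [::2;8;13;3;14;0;11;1;12];
     [::5;11;1;6;2;3;14;4;0];
     [::8;14;4;9;5;6;2;7;3];
     [::5;1;2;14;11;9;12;7;6];
     [::8;4;5;2;14;12;0;10;9];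
     [::11;7;8;5;2;0;3;13;12];
     [::14;10;11;8;5;3;6;1;0];
     [::2;13;14;11;8;6;9;4;3];
     [::13;5;6;0;8;9;14;1;10];
     [::1;8;9;3;11;12;2;4;13];
     [::4;11;12;6;14;0;5;7;1];
     [::7;14;0;9;2;3;8;10;4];
     [::10;2;3;12;5;6;11;13;7];
     [::4;1;14;3;6;7;11;0;9];
     [::7;4;2;6;9;10;14;3;12];
     [::10;7;5;9;12;13;2;6;0];
     [::13;10;8;12;0;1;5;9;3];
     [::1;13;11;0;3;4;8;12;6];
     [::13;14;5;4;10;12;9;3;6];
     [::1;2;8;7;13;0;12;6;9];
     [::4;5;11;10;1;3;0;9;12];
     [::7;8;14;13;4;6;3;12;0];
     [::10;11;2;1;7;9;6;0;3];
     [::1;8;11;2;13;0;6;7;14];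
     [::4;11;14;5;1;3;9;10;2];
     [::7;14;2;8;4;6;12;13;5];
     [::10;2;5;11;7;9;0;1;8];
     [::13;5;8;14;10;12;3;4;11];
     [::2;1;3;12;8;5;6;14;4];
     [::5;4;6;0;11;8;9;2;7];
     [::8;7;9;3;14;11;12;5;10];
     [::11;10;12;6;2;14;0;8;13];
     [::14;13;0;9;5;2;3;11;1];
     [::4;13;5;1;8;12;14;7;9];
     [::7;1;8;4;11;0;2;10;12];
     [::10;4;11;7;14;3;5;13;0];
     [::13;7;14;10;2;6;8;1;3];
     [::1;10;2;13;5;9;11;4;6];
     [::3;11;7;10;9;4;2;0;8];
     [::6;14;10;13;12;7;5;3;11];
     [::9;2;13;1;0;10;8;6;14];
     [::12;5;1;4;3;13;11;9;2];
     [::0;8;4;7;6;1;14;12;5];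
     [::4;14;12;9;1;13;7;6;10];
     [::7;2;0;12;4;1;10;9;13];
     [::10;5;3;0;7;4;13;12;1];
     [::13;8;6;3;10;7;1;0;4];
     [::1;11;9;6;13;10;4;3;7]].

Definition codes15 : seq (seq bool) :=
  map (triple_code 15) (flatten (map (@cycle_windows nat) cycles15)).

Definition std_code15 (k : nat) : seq bool := [seq j %/ 3 == k | j <- iota 0 15].

Lemma size_cycles15 : size cycles15 = 50.
Proof. by []. Qed.

Lemma cycles15_shape :
  all (fun c => [&& size c == 9, uniq c & all (fun x => x <= 14) c]) cycles15.
Proof. by vm_compute. Qed.

Lemma uniq_codes15 : uniq codes15.
Proof. by vm_compute. Qed.

Lemma size_codes15 : size codes15 = 450.
Proof. by vm_compute. Qed.

Lemma codes15_triples : all (fun b => count id b == 3) codes15.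
Proof. by vm_compute. Qed.

Lemma codes15_avoid_std : all (fun k => all (fun b => b != std_code15 k) codes15) (iota 0 5).
Proof. by vm_compute. Qed.

Lemma std_code15_triples : all (fun k => count id (std_code15 k) == 3) (iota 0 5).
Proof. by vm_compute. Qed.

Definition std_cycles15 : seq (seq 'I_15) := map (map (@inord 14)) cycles15.

Lemma char_seq_std_edges15 : map (@char_seq 15) (edges_of std_cycles15) = codes15.
Proof.
rewrite /edges_of /codes15 !map_flatten -!map_comp; congr flatten.
apply/eq_in_map => c c_in /=; apply: char_seq_edges.
by case/and3P: (allP cycles15_shape c c_in).
Qed.

Lemma std_decomposition15 : decomposition 9 (K3_minus (std_factor 5)) std_cycles15.
Proof.
have code_in e : e \in edges_of std_cycles15 -> char_seq e \in codes15.
  by rewrite -char_seq_std_edges15; apply: map_f.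
have char_seq_std (k : 'I_5) : char_seq (std_block 5 k) = std_code15 k.
  exact: char_seq_pred.
apply: decomposition_by_count.
- rewrite all_map; apply/allP => c c_in.
  case/and3P: (allP cycles15_shape c c_in) => size_c uniq_c /allP c_le.
  rewrite /= /is_tight_cycle size_map size_c (map_inj_in_uniq _) //.
  by move=> x y /c_le le_x /c_le le_y /(congr1 val); rewrite /= !inordK.
- by apply: (map_uniq (f := @char_seq 15)); rewrite char_seq_std_edges15 uniq_codes15.
- move=> e /code_in e_code; rewrite !inE -count_char_seq (allP codes15_triples) // andbT.
  apply/negP => /imsetP[k _ e_def].
  have k_in : val k \in iota 0 5 by rewrite mem_iota ltn_ord.
  have /allP/(_ _ e_code) := allP codes15_avoid_std k k_in.
  by rewrite e_def char_seq_std eqxx.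
- rewrite -(size_map (@char_seq 15)) char_seq_std_edges15 size_codes15.
  rewrite card_K3_minus ?card_std_factor ?card_ord //.
  apply/subsetP => _ /imsetP[k _ ->]; rewrite inE -count_char_seq char_seq_std.
  by apply: (allP std_code15_triples); rewrite mem_iota ltn_ord.
Qed.

Theorem lemma13 :
  forall I : {set {set 'I_15}}, one_factor I ->
  exists cs : seq (seq 'I_15),
    size cs = 50 /\ decomposition 9 (K3_minus I) cs.
Proof.
move=> I /(@one_factor_image_std 5) [f f_inj ->].
exists (map (map f) std_cycles15); split; first by rewrite !size_map size_cycles15.
by rewrite -imset_K3_minus //; apply: decomposition_relabel std_decomposition15.
Qed.
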